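(* Let $d_A,d_B$ be positive integers. Let $\{\mathbf{G}^{(A)}_i\}_{i=0}^{d_A^2-1}$ be a basis of the space of complex $d_A\times d_A$ matrices with $\mathbf{G}^{(A)}_0=\mathbf{I}_{d_A}$, $\mathrm{Tr}(\mathbf{G}^{(A)}_i)=0$ and $\mathrm{Tr}\big((\mathbf{G}^{(A)}_i)^\dagger \mathbf{G}^{(A)}_{i'}\big)=\kappa_A\delta_{ii'}$ for all $i,i'\in\{1,\dots,d_A^2-1\}$, where $\kappa_A\ge 1$; similarly let $\{\mathbf{G}^{(B)}_j\}_{j=0}^{d_B^2-1}$ be such a basis for $d_B\times d_B$ matrices with constant $\kappa_B\ge1$. For a state (positive semidefinite trace-one matrix) $\rho$ on $\mathbb{C}^{d_A}\otimes\mathbb{C}^{d_B}$ define the column vectors $\mathcal{T}^{(A)}\in\mathbb{C}^{d_A^2-1}$, $\mathcal{T}^{(B)}\in\mathbb{C}^{d_B^2-1}$ and the matrix $\mathcal{T}^{(AB)}\in\mathbb{C}^{(d_A^2-1)\times(d_B^2-1)}$ by $t^{(A)}_i=\frac{d_A}{\kappa_A}\mathrm{Tr}\big(\rho(\mathbf{G}^{(A)}_i\otimes \mathbf{I}_{d_B})\big)$, $t^{(B)}_j=\frac{d_B}{\kappa_B}\mathrm{Tr}\big(\rho(\mathbf{I}_{d_A}\otimes \mathbf{G}^{(B)}_j)\big)$, $t^{(AB)}_{ij}=\frac{d_Ad_B}{\kappa_A\kappa_B}\mathrm{Tr}\big(\rho(\mathbf{G}^{(A)}_i\otimes \mathbf{G}^{(B)}_j)\big)$.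 For positive integers $p_1,p_2,q_1,q_2$ and real vectors $\bm u\in\mathbb{R}^{p_1}$, $\bm v\in\mathbb{R}^{p_2}$, $\bm\alpha\in\mathbb{R}^{q_1}$, $\bm\beta\in\mathbb{R}^{q_2}$, define the $(p_1+q_1(d_A^2-1))\times(p_2+q_2(d_B^2-1))$ block matrix $$\mathcal{M}_{\bm u,\bm v,\bm\alpha,\bm\beta}^{(A|B)}(\rho)=\begin{pmatrix}\bm u\bm v^{\rm T} & \bm u\,(\bm\beta\otimes\mathcal{T}^{(B)})^{\rm T}\\ (\bm\alpha\otimes\mathcal{T}^{(A)})\,\bm v^{\rm T} & (\bm\alpha\bm\beta^{\rm T})\otimes\mathcal{T}^{(AB)}\end{pmatrix},$$ where $\otimes$ is the Kronecker product. If $\rho$ is separable, then $$\big\|\mathcal{M}_{\bm u,\bm v,\bm\alpha,\bm\beta}^{(A|B)}(\rho)\big\|_{\rm tr}\le\sqrt{\Big(\|\bm u\|^2+\|\bm\alpha\|^2\frac{d_A^2-d_A}{\kappa_A}\Big)\Big(\|\bm v\|^2+\|\bm\beta\|^2\frac{d_B^2-d_B}{\kappa_B}\Big)}.$$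
   Context: $\|\mathbf{X}\|_{\rm tr}=\mathrm{Tr}\big((\mathbf{X}^\dagger\mathbf{X})^{1/2}\big)$ is the trace norm and $\|\cdot\|$ is the Euclidean norm of a real vector. A state $\rho$ on $\mathbb{C}^{d_A}\otimes\mathbb{C}^{d_B}$ is separable if $\rho=\sum_i p_i\,\rho^{(A)}_i\otimes\rho^{(B)}_i$ with $p_i\ge0$, $\sum_ip_i=1$ and $\rho^{(A)}_i,\rho^{(B)}_i$ pure states on $\mathbb{C}^{d_A}$ and $\mathbb{C}^{d_B}$, respectively. *)

From HB Require Import structures.
From mathcomp Require Import all_boot all_order all_algebra.
From mathcomp Require Import complex mxtens.
From mathcomp Require Import boolp classical_sets reals.

Set Implicit Arguments.
Unset Strict Implicit.
Unset Printing Implicit Defensive.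

Import Order.TTheory GRing.Theory Num.Theory.
Local Open Scope ring_scope.
Local Open Scope sesquilinear_scope.
Local Open Scope complex_scope.

Section Defs.
Variable R : realType.
Local Notation C := R[i].

Definition dagmx (m n : nat) (X : 'M[C]_(m, n)) : 'M[C]_(n, m) := X ^t*.

Definition psdmx (n : nat) (A : 'M[C]_n) : Prop :=
  dagmx A = A /\ forall v : 'cV[C]_n, 0 <= (dagmx v *m A *m v) 0 0.

Definition is_state (n : nat) (rho : 'M[C]_n) : Prop :=
  psdmx rho /\ \tr rho = 1.

Definition is_pure_state (n : nat) (rho : 'M[C]_n) : Prop :=
  exists psi : 'cV[C]_n, dagmx psi *m psi = 1 /\ rho = psi *m dagmx psi.

Definition separable (dA dB : nat) (rho : 'M[C]_(dA * dB)) : Prop :=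
  exists (k : nat) (p : 'I_k -> R) (rA : 'I_k -> 'M[C]_dA)
         (rB : 'I_k -> 'M[C]_dB),
    [/\ forall i, 0 <= p i,
        \sum_i p i = 1,
        forall i, is_pure_state (rA i) /\ is_pure_state (rB i)
      & rho = \sum_i (p i)%:C *: (rA i *t rB i)].

Definition psd_sqrt (n : nat) (A : 'M[C]_n) : 'M[C]_n :=
  xget 0 [set S | psdmx S /\ S *m S = A].

(* trace norm  ||X||_tr = Tr((X^dagger X)^{1/2})  (a complex number that is
   real and nonnegative) *)
Definition trnorm (m n : nat) (X : 'M[C]_(m, n)) : C :=
  \tr (psd_sqrt (dagmx X *m X)).

Definition enorm (n : nat) (u : 'cV[R]_n) : R :=
  Num.sqrt (\sum_i u i 0 ^+ 2).

(* The family {G_i}_{i=0}^{d^2-1} with G_0 = I and G_{i+1} = G i is a basis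
   of the d x d complex matrices, traceless for i >= 1, and
   Tr(G_i^dagger G_i') = kappa delta_{ii'} for i, i' >= 1. *)
Definition good_basis (d : nat) (kappa : R)
    (G : 'I_(d ^ 2 - 1) -> 'M[C]_d) : Prop :=
  let Gm : 'M[C]_(1 + (d ^ 2 - 1), d * d) :=
    col_mx (mxvec (1%:M : 'M[C]_d)) (\matrix_i mxvec (G i)) in
  [/\ row_free Gm, row_full Gm,
      forall i, \tr (G i) = 0
    & forall i i', \tr (dagmx (G i) *m G i') = kappa%:C * (i == i')%:R].

Definition TA (dA dB : nat) (kA : R) (GA : 'I_(dA ^ 2 - 1) -> 'M[C]_dA)
    (rho : 'M[C]_(dA * dB)) : 'cV[C]_(dA ^ 2 - 1) :=
  \col_i ((dA%:R / kA)%:C * \tr (rho *m (GA i *t (1%:M : 'M[C]_dB)))).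

Definition TB (dA dB : nat) (kB : R) (GB : 'I_(dB ^ 2 - 1) -> 'M[C]_dB)
    (rho : 'M[C]_(dA * dB)) : 'cV[C]_(dB ^ 2 - 1) :=
  \col_j ((dB%:R / kB)%:C * \tr (rho *m ((1%:M : 'M[C]_dA) *t GB j))).

Definition TAB (dA dB : nat) (kA kB : R)
    (GA : 'I_(dA ^ 2 - 1) -> 'M[C]_dA) (GB : 'I_(dB ^ 2 - 1) -> 'M[C]_dB)
    (rho : 'M[C]_(dA * dB)) : 'M[C]_(dA ^ 2 - 1, dB ^ 2 - 1) :=
  \matrix_(i, j) ((dA%:R * dB%:R / (kA * kB))%:C
                   * \tr (rho *m (GA i *t GB j))).

Definition cmx (m n : nat) (X : 'M[R]_(m, n)) : 'M[C]_(m, n) :=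
  map_mx (fun x => x%:C) X.

Definition Mmat (dA dB : nat) (kA kB : R)
    (GA : 'I_(dA ^ 2 - 1) -> 'M[C]_dA) (GB : 'I_(dB ^ 2 - 1) -> 'M[C]_dB)
    (p1 p2 q1 q2 : nat) (u : 'cV[R]_p1) (v : 'cV[R]_p2)
    (alpha : 'cV[R]_q1) (beta : 'cV[R]_q2) (rho : 'M[C]_(dA * dB))
  : 'M[C]_(p1 + q1 * (dA ^ 2 - 1), p2 + q2 * (dB ^ 2 - 1)) :=
  block_mx (cmx u *m (cmx v)^T)
           (cmx u *m (cmx beta *t @TB dA dB kB GB rho)^T)
           ((cmx alpha *t @TA dA dB kA GA rho) *m (cmx v)^T)
           ((cmx alpha *m (cmx beta)^T) *t @TAB dA dB kA kB GA GB rho).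

End Defs.

(* A separable state is a convex combination rho = sum_k p_k a_k (x) b_k of
   products of pure states, and every correlation quantity is affine in rho, so
   M(rho) = sum_k p_k x_k y_k^T with x_k = (u; alpha (x) t_A(a_k)) and
   y_k = (v; beta (x) t_B(b_k)), where t(a) is the local Bloch vector of a.
   Parseval's identity in the orthogonal basis {I, G_i} gives
   ||t(a)||^2 = (d^2 - d)/kappa for a pure state a, so ||x_k||^2 and ||y_k||^2
   are exactly the two factors under the square root.  Finally
   ||M||_tr <= sum_k p_k ||x_k|| ||y_k||: the polar decomposition writes
   Tr sqrt(M^dagger M) as Tr(W^dagger M) for a contraction W, and each term
   y_k^T W^dagger x_k is bounded by Cauchy-Schwarz. *)

From HB Require Import structures.
From mathcomp Require Import all_boot all_order all_algebra.
From mathcomp Require Import complex mxtens.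
From mathcomp Require Import boolp classical_sets reals.
From mathcomp Require Import ring.

Set Implicit Arguments.
Unset Strict Implicit.
Unset Printing Implicit Defensive.

Import Order.TTheory GRing.Theory Num.Theory.
Local Open Scope ring_scope.
Local Open Scope sesquilinear_scope.

Section ComRingMatrices.
Variable T : comPzRingType.

Lemma tensmx_sumr I (r : seq I) (P : pred I) m n p q (A : 'M[T]_(m, n))
    (B : I -> 'M[T]_(p, q)) :
  A *t (\sum_(i <- r | P i) B i) = \sum_(i <- r | P i) (A *t B i).
Proof.
apply/matrixP => i j; rewrite !mxE !summxE mulr_sumr.
by apply: eq_bigr => k _; rewrite mxE.
Qed.

Lemma tensmxZr m n p q a (A : 'M[T]_(m, n)) (B : 'M[T]_(p, q)) :
  A *t (a *: B) = a *: (A *t B).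
Proof. by apply/matrixP => i j; rewrite !mxE mulrCA. Qed.

Lemma mxtrace_tens m n (A : 'M[T]_m) (B : 'M[T]_n) :
  \tr (A *t B) = \tr A * \tr B.
Proof. by rewrite /mxtrace mulr_sum; apply: eq_bigr => l _; rewrite !mxE. Qed.

Lemma block_mx_sum I (r : seq I) m1 m2 n1 n2 (A : I -> 'M[T]_(m1, n1))
    (B : I -> 'M[T]_(m1, n2)) (D : I -> 'M[T]_(m2, n1))
    (E : I -> 'M[T]_(m2, n2)) :
  \sum_(i <- r) block_mx (A i) (B i) (D i) (E i) =
  block_mx (\sum_(i <- r) A i) (\sum_(i <- r) B i)
           (\sum_(i <- r) D i) (\sum_(i <- r) E i).
Proof.
elim: r => [|i r IHr]; first by rewrite !big_nil block_mx0.
by rewrite !big_cons IHr add_block_mx.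
Qed.

End ComRingMatrices.

Section ComplexMatrices.
Variable C : numClosedFieldType.

Lemma adjmxM m n p (A : 'M[C]_(m, n)) (B : 'M[C]_(n, p)) :
  (A *m B)^t* = B^t* *m A^t*.
Proof. by rewrite trmx_mul map_mxM. Qed.

Lemma adjmx_col m1 m2 n (A : 'M[C]_(m1, n)) (B : 'M[C]_(m2, n)) :
  (col_mx A B)^t* = row_mx (A^t*) (B^t*).
Proof. by rewrite tr_col_mx map_row_mx. Qed.

Lemma mxtrace_adj n (A : 'M[C]_n) : \tr (A^t*) = (\tr A)^*.
Proof. by rewrite trace_map_mx mxtrace_tr. Qed.

Definition cnorm2 n (x : 'cV[C]_n) : C := (x^t* *m x) 0 0.

Lemma cnorm2E n (x : 'cV[C]_n) : cnorm2 x = \sum_i `|x i 0| ^+ 2.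
Proof.
by rewrite /cnorm2 mxE; apply: eq_bigr => i _; rewrite !mxE normCK mulrC.
Qed.

Lemma cnorm2_ge0 n (x : 'cV[C]_n) : 0 <= cnorm2 x.
Proof. by rewrite cnorm2E sumr_ge0 // => i _; rewrite exprn_ge0. Qed.

Lemma cnorm2_col m n (x : 'cV[C]_m) (y : 'cV[C]_n) :
  cnorm2 (col_mx x y) = cnorm2 x + cnorm2 y.
Proof. by rewrite /cnorm2 adjmx_col mul_row_col mxE. Qed.

Lemma cnorm2_tens m n (x : 'cV[C]_m) (y : 'cV[C]_n) :
  cnorm2 (x *t y) = cnorm2 x * cnorm2 y.
Proof.
rewrite /cnorm2 !mxE mulr_sum; apply: eq_bigr => l _; rewrite !mxE.
rewrite !(ord1 (mxtens_unindex _).1) !(ord1 (mxtens_unindex _).2).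
by rewrite rmorphM mulrACA.
Qed.

Lemma cnorm2_herm_idem_le n (Q : 'M[C]_n) (x : 'cV[C]_n) :
  Q^t* = Q -> Q *m Q = Q -> cnorm2 (Q *m x) <= cnorm2 x.
Proof.
move=> Q_herm Q_idem; rewrite -subr_ge0.
have := cnorm2_ge0 (x - Q *m x); rewrite /cnorm2.
have -> : (x - Q *m x)^t* = x^t* - x^t* *m Q.
  by rewrite -{2}Q_herm -adjmxM -map_mxB -linearB.
rewrite adjmxM Q_herm mulmxBl !mulmxBr !mulmxA.
by rewrite -(mulmxA (x^t*) Q Q) Q_idem subrr subr0 !mxE.
Qed.

Lemma cnorm2_CauchySchwarz n (x y : 'cV[C]_n) :
  `|(x^T *m y) 0 0| <= sqrtC (cnorm2 x) * sqrtC (cnorm2 y).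
Proof.
have -> : (x^T *m y) 0 0 = dotmx (x^T) (y^t*) by rewrite dotmxE trmxCK.
have -> : cnorm2 x = dotmx (x^T) (x^T).
  by rewrite dotmxE /cnorm2 !mxE; apply: eq_bigr => i _; rewrite !mxE mulrC.
have -> : cnorm2 y = dotmx (y^t*) (y^t*) by rewrite dotmxE trmxCK.
exact: (CauchySchwarz_sqrt (dotmx (n:=n)) _ _).1.
Qed.

Lemma diag_mxM n (a b : 'rV[C]_n) :
  diag_mx a *m diag_mx b = diag_mx (\row_j (a 0 j * b 0 j)).
Proof.
apply/matrixP => i j; rewrite mul_diag_mx !mxE.
by case: (i == j); rewrite ?mulr1n ?mulr0n ?mulr0.
Qed.

Lemma psdmx_spectral n (S : 'M[C]_n) :
  S^t* = S -> (forall v : 'cV[C]_n, 0 <= (v^t* *m S *m v) 0 0) ->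
  exists P : 'M[C]_n, exists s : 'rV[C]_n,
    [/\ P \is unitarymx, forall j, 0 <= s 0 j & S = P^t* *m diag_mx s *m P].
Proof.
move=> S_herm S_psd; set P := spectralmx S; set s := spectral_diag S.
have P_unitary : P \is unitarymx by apply: spectral_unitarymx.
have S_eq : S = P^t* *m diag_mx s *m P.
  rewrite -invmx_unitary //.
  by apply/orthomx_spectralP/normalmxP; rewrite S_herm.
exists P, s; split=> // j.
have := S_psd (P^t* *m delta_mx j 0); rewrite adjmxM trmxCK.
have -> : (delta_mx j 0 : 'cV[C]_n)^t* = delta_mx 0 j.
  by rewrite trmx_delta map_delta_mx.
by rewrite S_eq !mulmxA !mulmxtVK // -rowE -colE !mxE eqxx mulr1n.
Qed.

Section UnitaryConjugation.
Variables (n : nat) (P : 'M[C]_n).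
Hypothesis P_unitary : P \is unitarymx.
Local Notation udiag a := (P^t* *m diag_mx a *m P).

Lemma udiagM (a b : 'rV[C]_n) :
  udiag a *m udiag b = udiag (\row_j (a 0 j * b 0 j)).
Proof. by rewrite !mulmxA mulmxtVK // -(mulmxA _ (diag_mx a)) diag_mxM. Qed.

Lemma udiag_adj (a : 'rV[C]_n) : (udiag a)^t* = udiag (map_mx Num.conj a).
Proof. by rewrite !adjmxM trmxCK tr_diag_mx map_diag_mx mulmxA. Qed.

Lemma mxtrace_udiag (a : 'rV[C]_n) : \tr (udiag a) = \sum_j a 0 j.
Proof.
by rewrite mxtrace_mulC mulmxA (unitarymxP P_unitary) mul1mx mxtrace_diag.
Qed.

Lemma trace_sqrt_gram_polar m (M : 'M[C]_(m, n)) (s : 'rV[C]_n) :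
  (forall j, 0 <= s 0 j) -> udiag s *m udiag s = M^t* *m M ->
  exists2 W : 'M[C]_(m, n), \tr (W^t* *m M) = \tr (udiag s)
    & forall x, cnorm2 (W^t* *m x) <= cnorm2 x.
Proof.
move=> s_ge0 MtM.
(* Since 0^-1 = 0, udiag s' is the Moore-Penrose pseudo-inverse. *)
pose s' := \row_j (s 0 j)^-1.
have s'_real : map_mx Num.conj s' = s'.
  by apply/rowP => j; rewrite !mxE geC0_conj // invr_ge0.
pose W := M *m udiag s'.
have W_adj : W^t* = udiag s' *m M^t* by rewrite adjmxM udiag_adj s'_real.
exists W => [|x].
  rewrite W_adj -mulmxA -MtM !udiagM !mxtrace_udiag; apply: eq_bigr => j _.
  rewrite !mxE; have [->|s_neq0] := eqVneq (s 0 j) 0; first by rewrite !mulr0.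
  by field.
have W_supp : W *m (W^t* *m W) = W.
  have -> : W^t* *m W = udiag s' *m (M^t* *m M) *m udiag s'.
    by rewrite W_adj /W !mulmxA.
  rewrite -MtM !udiagM /W -(mulmxA M) udiagM.
  congr (_ *m (_ *m diag_mx _ *m _)).
  apply/rowP => j; rewrite !mxE.
  have [->|s_neq0] := eqVneq (s 0 j) 0; first by rewrite invr0 !mul0r.
  by field.
clearbody W; pose Q := W *m W^t*.
have Q_herm : Q^t* = Q by rewrite adjmxM trmxCK.
have Q_idem : Q *m Q = Q by rewrite mulmxA -(mulmxA W) W_supp.
suff -> : cnorm2 (W^t* *m x) = cnorm2 (Q *m x) by apply: cnorm2_herm_idem_le.
rewrite /cnorm2 (adjmxM Q x) Q_herm (adjmxM (W^t*) x) trmxCK.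
by rewrite [in RHS]mulmxA -(mulmxA _ Q Q) Q_idem /Q !mulmxA.
Qed.

End UnitaryConjugation.

Lemma trace_sqrt_gram_le m n K (M : 'M[C]_(m, n)) (S : 'M[C]_n)
    (c : 'I_K -> C) (x : 'I_K -> 'cV[C]_m) (y : 'I_K -> 'cV[C]_n) :
  S^t* = S -> (forall v : 'cV_n, 0 <= (v^t* *m S *m v) 0 0) ->
  S *m S = M^t* *m M ->
  (forall k, 0 <= c k) -> M = \sum_k c k *: (x k *m (y k)^T) ->
  \tr S <= \sum_k c k * (sqrtC (cnorm2 (x k)) * sqrtC (cnorm2 (y k))).
Proof.
move=> S_herm S_psd S_sqrt c_ge0 M_eq.
have [P [s [P_unitary s_ge0 S_eq]]] := psdmx_spectral S_herm S_psd.
rewrite S_eq in S_sqrt *.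
have trS_ge0 : 0 <= \tr (P^t* *m diag_mx s *m P).
  by rewrite mxtrace_udiag // sumr_ge0.
have [W trWM W_contr] := trace_sqrt_gram_polar P_unitary s_ge0 S_sqrt.
rewrite -(ger0_norm trS_ge0) -trWM M_eq mulmx_sumr raddf_sum /=.
apply: (le_trans (ler_norm_sum _ _ _)); apply: ler_sum => k _.
rewrite -scalemxAr mxtraceZ normrM (ger0_norm (c_ge0 k)) ler_wpM2l //.
rewrite mulmxA mxtrace_mulC trace_mx11 mulrC.
apply: (le_trans (cnorm2_CauchySchwarz _ _)).
by rewrite ler_wpM2l ?sqrtC_ge0 ?cnorm2_ge0 // ler_sqrtC ?nnegrE ?cnorm2_ge0.
Qed.

End ComplexMatrices.

Section QuantumCorrelations.
Variable R : realType.
Local Notation C := R[i].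
Local Open Scope complex_scope.

Lemma sqrtC_real (r : R) : 0 <= r -> sqrtC r%:C = (Num.sqrt r)%:C.
Proof.
move=> r_ge0; rewrite -{1}(sqr_sqrtr r_ge0) rmorphXn.
by rewrite sqrCK // ler0c sqrtr_ge0.
Qed.

Lemma cnorm2_cmx n (u : 'cV[R]_n) : cnorm2 (cmx u) = (enorm u ^+ 2)%:C.
Proof.
rewrite cnorm2E /enorm sqr_sqrtr ?sumr_ge0 // => [|i _]; last exact: sqr_ge0.
rewrite rmorph_sum; apply: eq_bigr => i _; rewrite !mxE normCK rmorphXn /=.
by rewrite conj_Creal ?expr2 //; apply/complex_realP; exists (u i 0).
Qed.

Lemma pure_state_adj n (a : 'M[C]_n) : is_pure_state a -> a^t* = a.
Proof. by case=> psi [_ ->]; rewrite adjmxM trmxCK. Qed.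

Lemma pure_state_idem n (a : 'M[C]_n) : is_pure_state a -> a *m a = a.
Proof.
by case=> psi [psi_unit ->]; rewrite mulmxA -(mulmxA psi) psi_unit mulmx1.
Qed.

Lemma pure_state_trace n (a : 'M[C]_n) : is_pure_state a -> \tr a = 1.
Proof.
case=> psi [psi_unit ->]; rewrite mxtrace_mulC.
by rewrite [dagmx psi *m psi]psi_unit mxtrace1.
Qed.

Lemma good_basis_expansion d kappa (G : 'I_(d ^ 2 - 1) -> 'M[C]_d)
    (A : 'M[C]_d) :
  (0 < d)%N -> kappa != 0 -> good_basis kappa G ->
  A = (\tr A / d%:R) *: 1%:M + \sum_i (\tr ((G i)^t* *m A) / kappa%:C) *: G i.
Proof.
move=> d_gt0 kappa_neq0 [_ G_full G_tr G_orth]; rewrite /dagmx in G_orth.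
have [c0 [r A_eq]] :
    exists c0 (r : 'I_(d ^ 2 - 1) -> C), A = c0 *: 1%:M + \sum_i r i *: G i.
  have /submxP [w w_eq] := submx_full (mxvec A) G_full.
  rewrite -[w]hsubmxK mul_row_col !mulmx_sum_row big_ord1 in w_eq.
  exists (lsubmx w 0 0), (fun i => rsubmx w 0 i); apply: (can_inj mxvecK).
  rewrite w_eq linearD linear_sum /= linearZ /=; congr (_ *: _ + _).
    by apply/rowP => j; rewrite mxE.
  by apply: eq_bigr => i _; rewrite rowK linearZ.
have d_neq0 : d%:R != 0 :> C by rewrite pnatr_eq0 -lt0n.
have kappa_neq0' : kappa%:C != 0 by rewrite fmorph_eq0.
have c0_eq : c0 = \tr A / d%:R.
  rewrite A_eq mxtraceD mxtraceZ mxtrace1 raddf_sum /= big1 ?addr0 ?mulfK //.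
  by move=> i _; rewrite mxtraceZ G_tr mulr0.
have r_eq j : r j = \tr ((G j)^t* *m A) / kappa%:C.
  rewrite A_eq mulmxDr mulmx_sumr mxtraceD -scalemxAr mxtraceZ mulmx1.
  rewrite mxtrace_adj G_tr conjC0 mulr0 add0r raddf_sum /= (bigD1 j) //= big1.
    by rewrite -scalemxAr mxtraceZ G_orth eqxx mulr1 addr0 mulfK.
  move=> i i_neq_j; rewrite -scalemxAr mxtraceZ G_orth eq_sym.
  by rewrite (negbTE i_neq_j) !mulr0.
rewrite {1}A_eq c0_eq; congr (_ + _).
by apply: eq_bigr => i _; rewrite r_eq.
Qed.

Lemma good_basis_parseval d kappa (G : 'I_(d ^ 2 - 1) -> 'M[C]_d)
    (A : 'M[C]_d) :
  (0 < d)%N -> kappa != 0 -> good_basis kappa G ->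
  \tr (A^t* *m A) =
    `|\tr A| ^+ 2 / d%:R + (\sum_i `|\tr ((G i)^t* *m A)| ^+ 2) / kappa%:C.
Proof.
move=> d_gt0 kappa_neq0 G_basis.
rewrite {2}(good_basis_expansion A d_gt0 kappa_neq0 G_basis).
rewrite mulmxDr mulmx_sumr mxtraceD -scalemxAr mxtraceZ mulmx1 mxtrace_adj.
congr (_ + _); first by rewrite normCK mulrAC.
rewrite raddf_sum /= mulr_suml; apply: eq_bigr => i _.
rewrite -scalemxAr mxtraceZ normCK mulrAC.
by rewrite -mxtrace_adj adjmxM trmxCK.
Qed.

Lemma pure_state_bloch_sqnorm d kappa (G : 'I_(d ^ 2 - 1) -> 'M[C]_d)
    (a : 'M[C]_d) :
  (0 < d)%N -> kappa != 0 -> good_basis kappa G -> is_pure_state a ->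
  \sum_i `|\tr (a *m G i)| ^+ 2 = kappa%:C * (1 - d%:R^-1).
Proof.
move=> d_gt0 kappa_neq0 G_basis a_pure.
have := good_basis_parseval a d_gt0 kappa_neq0 G_basis.
rewrite (pure_state_adj a_pure) (pure_state_idem a_pure).
rewrite (pure_state_trace a_pure) normr1 expr1n mul1r.
have -> : \sum_i `|\tr ((G i)^t* *m a)| ^+ 2 = \sum_i `|\tr (a *m G i)| ^+ 2.
  apply: eq_bigr => i _.
  by rewrite -norm_conjC -mxtrace_adj adjmxM trmxCK (pure_state_adj a_pure).
move: (\sum_i _) => s one_eq.
have kappa_neq0' : kappa%:C != 0 by rewrite fmorph_eq0.
have : s / kappa%:C = 1 - d%:R^-1.
  by rewrite [X in _ = X - _]one_eq addrAC subrr add0r.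
by move <-; rewrite mulrC divfK.
Qed.

Definition bloch_vec d kappa (G : 'I_(d ^ 2 - 1) -> 'M[C]_d) (a : 'M[C]_d) :
    'cV[C]_(d ^ 2 - 1) :=
  \col_i ((d%:R / kappa)%:C * \tr (a *m G i)).

Lemma cnorm2_bloch_vec d kappa (G : 'I_(d ^ 2 - 1) -> 'M[C]_d) (a : 'M[C]_d) :
  (0 < d)%N -> 0 < kappa -> good_basis kappa G -> is_pure_state a ->
  cnorm2 (bloch_vec kappa G a) = ((d ^ 2 - d)%:R / kappa)%:C.
Proof.
move=> d_gt0 kappa_gt0 G_basis a_pure.
have kappa_neq0 : kappa != 0 by rewrite gt_eqF.
transitivity ((d%:R / kappa)%:C ^+ 2 * \sum_i `|\tr (a *m G i)| ^+ 2).
  rewrite cnorm2E mulr_sumr; apply: eq_bigr => i _.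
  by rewrite mxE normrM exprMn ger0_norm // ler0c divr_ge0 // ltW.
rewrite (pure_state_bloch_sqnorm d_gt0 kappa_neq0 G_basis a_pure).
rewrite natrB; last by rewrite -{1}(expn1 d) leq_pexp2l.
rewrite natrX !rmorphM /= !fmorphV /= !rmorph_nat.
by field; rewrite fmorph_eq0 kappa_neq0 pnatr_eq0 -lt0n.
Qed.

Definition bloch_stack p q n (u : 'cV[R]_p) (alpha : 'cV[R]_q) (t : 'cV[C]_n) :
    'cV[C]_(p + q * n) :=
  col_mx (cmx u) (cmx alpha *t t).

Lemma cnorm2_bloch_stack_pure p q d kappa (u : 'cV[R]_p) (alpha : 'cV[R]_q)
    (G : 'I_(d ^ 2 - 1) -> 'M[C]_d) (a : 'M[C]_d) :
  (0 < d)%N -> 0 < kappa -> good_basis kappa G -> is_pure_state a ->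
  cnorm2 (bloch_stack u alpha (bloch_vec kappa G a)) =
    (enorm u ^+ 2 + enorm alpha ^+ 2 * ((d ^ 2 - d)%:R / kappa))%:C.
Proof.
move=> d_gt0 kappa_gt0 G_basis a_pure.
rewrite /bloch_stack cnorm2_col (cnorm2_tens (cmx alpha)) !cnorm2_cmx.
by rewrite cnorm2_bloch_vec // -rmorphM -rmorphD.
Qed.

Lemma trnorm_rank1_sum_le m n K (c : 'I_K -> C) (x : 'I_K -> 'cV[C]_m)
    (y : 'I_K -> 'cV[C]_n) :
  (forall k, 0 <= c k) ->
  trnorm (\sum_k c k *: (x k *m (y k)^T)) <=
    \sum_k c k * (sqrtC (cnorm2 (x k)) * sqrtC (cnorm2 (y k))).
Proof.
move=> c_ge0; rewrite /trnorm /psd_sqrt.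
case: xgetP => [S _ [[S_herm S_psd] S_sqrt] | _].
  exact: trace_sqrt_gram_le S_herm S_psd S_sqrt c_ge0 _.
(* junk case of [xget]: no PSD square root, and trnorm defaults to 0 *)
rewrite mxtrace0 sumr_ge0 // => k _.
by rewrite !mulr_ge0 ?sqrtC_ge0 ?cnorm2_ge0.
Qed.

Section SeparableState.
Variables (dA dB : nat) (kA kB : R).
Variables (GA : 'I_(dA ^ 2 - 1) -> 'M[C]_dA) (GB : 'I_(dB ^ 2 - 1) -> 'M[C]_dB).
Variables (K : nat) (c : 'I_K -> C).
Variables (rA : 'I_K -> 'M[C]_dA) (rB : 'I_K -> 'M[C]_dB).
Hypothesis c_sum1 : \sum_k c k = 1.
Hypothesis rA_tr1 : forall k, \tr (rA k) = 1.
Hypothesis rB_tr1 : forall k, \tr (rB k) = 1.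
Let rho := \sum_k c k *: (rA k *t rB k).

Lemma mxtrace_separable (X : 'M[C]_dA) (Y : 'M[C]_dB) :
  \tr (rho *m (X *t Y)) = \sum_k c k * (\tr (rA k *m X) * \tr (rB k *m Y)).
Proof.
rewrite mulmx_suml raddf_sum /=; apply: eq_bigr => k _.
by rewrite -scalemxAl mxtraceZ tensmx_mul mxtrace_tens.
Qed.

Lemma TA_separable :
  @TA R dA dB kA GA rho = \sum_k c k *: bloch_vec kA GA (rA k).
Proof.
apply/matrixP => i j; rewrite !mxE summxE mxtrace_separable mulr_sumr.
by apply: eq_bigr => k _; rewrite !mxE mulmx1 rB_tr1 mulr1 mulrCA.
Qed.

Lemma TB_separable :
  @TB R dA dB kB GB rho = \sum_k c k *: bloch_vec kB GB (rB k).
Proof.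
apply/matrixP => i j; rewrite !mxE summxE mxtrace_separable mulr_sumr.
by apply: eq_bigr => k _; rewrite !mxE mulmx1 rA_tr1 mul1r mulrCA.
Qed.

Lemma TAB_separable :
  @TAB R dA dB kA kB GA GB rho =
    \sum_k c k *: (bloch_vec kA GA (rA k) *m (bloch_vec kB GB (rB k))^T).
Proof.
apply/matrixP => i j; rewrite !mxE summxE mxtrace_separable mulr_sumr.
apply: eq_bigr => k _; rewrite !mxE big_ord1 !mxE -mulf_div rmorphM /=.
ring.
Qed.

Lemma Mmat_separable p1 p2 q1 q2 (u : 'cV[R]_p1) (v : 'cV[R]_p2)
    (alpha : 'cV[R]_q1) (beta : 'cV[R]_q2) :
  @Mmat R dA dB kA kB GA GB p1 p2 q1 q2 u v alpha beta rho =
    \sum_k c k *: (bloch_stack u alpha (bloch_vec kA GA (rA k))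
                   *m (bloch_stack v beta (bloch_vec kB GB (rB k)))^T).
Proof.
under eq_bigr do rewrite tr_col_mx mul_col_row scale_block_mx.
rewrite block_mx_sum; congr block_mx.
- by rewrite -scaler_suml c_sum1 scale1r.
- rewrite TB_separable tensmx_sumr linear_sum mulmx_sumr; apply: eq_bigr => k _.
  by rewrite tensmxZr linearZ scalemxAr.
- rewrite TA_separable tensmx_sumr mulmx_suml; apply: eq_bigr => k _.
  by rewrite tensmxZr scalemxAl.
- rewrite TAB_separable tensmx_sumr; apply: eq_bigr => k _.
  set ta := bloch_vec kA GA (rA k); set tb := bloch_vec kB GB (rB k).
  by rewrite tensmxZr (trmx_tens (cmx beta) tb) (tensmx_mul (cmx alpha) ta).
Qed.

End SeparableState.

End QuantumCorrelations.

Theorem theorem1 (R : realType) (dA dB : nat) (kA kB : R)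
    (GA : 'I_(dA ^ 2 - 1) -> 'M[R[i]]_dA)
    (GB : 'I_(dB ^ 2 - 1) -> 'M[R[i]]_dB)
    (p1 p2 q1 q2 : nat) (u : 'cV[R]_p1) (v : 'cV[R]_p2)
    (alpha : 'cV[R]_q1) (beta : 'cV[R]_q2) (rho : 'M[R[i]]_(dA * dB)) :
  (0 < dA)%N -> (0 < dB)%N ->
  1 <= kA -> 1 <= kB ->
  good_basis kA GA -> good_basis kB GB ->
  (0 < p1)%N -> (0 < p2)%N -> (0 < q1)%N -> (0 < q2)%N ->
  is_state rho -> @separable R dA dB rho ->
  trnorm (@Mmat R dA dB kA kB GA GB p1 p2 q1 q2 u v alpha beta rho)
    <= (Num.sqrt
         ((enorm u ^+ 2 + enorm alpha ^+ 2 * ((dA ^ 2 - dA)%:R / kA))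
        * (enorm v ^+ 2 + enorm beta ^+ 2 * ((dB ^ 2 - dB)%:R / kB))))%:C%C.
Proof.
move=> dA_gt0 dB_gt0 kA_ge1 kB_ge1 GA_basis GB_basis _ _ _ _ _.
case=> K [p [rA [rB [p_ge0 p_sum1 pure rho_eq]]]].
have kA_gt0 : 0 < kA := lt_le_trans ltr01 kA_ge1.
have kB_gt0 : 0 < kB := lt_le_trans ltr01 kB_ge1.
set X := _ + _; set Y := _ + _.
have X_ge0 : 0 <= X.
  exact: addr_ge0 (sqr_ge0 _)
    (mulr_ge0 (sqr_ge0 _) (divr_ge0 (ler0n _ _) (ltW kA_gt0))).
have Y_ge0 : 0 <= Y.
  exact: addr_ge0 (sqr_ge0 _)
    (mulr_ge0 (sqr_ge0 _) (divr_ge0 (ler0n _ _) (ltW kB_gt0))).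
rewrite rho_eq Mmat_separable; first last.
- by move=> k; apply/pure_state_trace/(pure k).2.
- by move=> k; apply/pure_state_trace/(pure k).1.
- by rewrite -rmorph_sum p_sum1.
apply: le_trans (trnorm_rank1_sum_le _ _ _) _ => [k|]; first by rewrite ler0c.
rewrite (eq_bigr (fun k => (p k)%:C%C * (Num.sqrt (X * Y))%:C%C)) => [|k _].
  by rewrite -mulr_suml -rmorph_sum p_sum1 mul1r.
rewrite (cnorm2_bloch_stack_pure u alpha dA_gt0 kA_gt0 GA_basis (pure k).1).
rewrite (cnorm2_bloch_stack_pure v beta dB_gt0 kB_gt0 GB_basis (pure k).2).
by rewrite !sqrtC_real // -rmorphM sqrtrM.
Qed.
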